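(* Let $N=\{1,2,\dots,n\}$ be a set of players and let $v:2^N\to\mathbb{R}$ be a monotonic characteristic function. Let $x=(x_1,\dots,x_n)$ be a payoff vector, where the players are indexed so that $x_1\le x_2\le\dots\le x_n$. Then $x$ is stable if and only if for every $i\in\{1,\dots,n\}$, $$x_i \;\ge\; v\Big(\bigcup_{j\le i}\{j\}\Big)=v(\{1,2,\dots,i\}).$$
   Context: A characteristic function $v:2^N\to\mathbb{R}$ assigns to each coalition $C\subseteq N$ the value $v(C)$ (e.g. the value of the model learnt from the pooled data of the players in $C$). It is monotonic if $C\subseteq C'$ implies $v(C)\le v(C')$. In this (modified) cooperative game, when the grand coalition $N$ forms, a payoff vector is a vector $x=(x_1,\dots,x_n)\in\mathbb{R}^n$ with $x_i\le v(N)$ for every player $i$ (each player individually receives at most the value created by the coalition; the sum of payoffs is not restricted). A payoff vector $x$ is stable if for every nonempty coalition $C\subseteq N$ there exists a player $k\in C$ with $x_k\ge v(C)$. *)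

(* Players N = {1..n} are rendered as 'I_n = {0..n-1}. *)
From mathcomp Require Import all_boot all_order all_algebra.
Set Implicit Arguments. Unset Strict Implicit. Unset Printing Implicit Defensive.
Import Order.TTheory GRing.Theory Num.Theory.
Local Open Scope ring_scope.

Definition monotonic (R : realDomainType) (n : nat) (v : {set 'I_n} -> R) : Prop :=
  forall C C' : {set 'I_n}, C \subset C' -> v C <= v C'.

(* payoff vector of the modified game: every x_i <= v(N). *)
Definition payoff_vector (R : realDomainType) (n : nat) (v : {set 'I_n} -> R)
  (x : 'I_n -> R) : Prop :=
  forall i : 'I_n, x i <= v [set: 'I_n].

Definition stable (R : realDomainType) (n : nat) (v : {set 'I_n} -> R)
  (x : 'I_n -> R) : Prop :=
  forall C : {set 'I_n}, C != set0 -> exists2 k, k \in C & v C <= x k.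

From mathcomp Require Import all_boot all_order all_algebra.
Set Implicit Arguments. Unset Strict Implicit. Unset Printing Implicit Defensive.
Import Order.TTheory GRing.Theory Num.Theory.
Local Open Scope ring_scope.

(* If x is sorted, the member of a prefix coalition {1..i} with the largest
   payoff is player i, so stability on prefixes says exactly x_i >= v{1..i}.
   Conversely, any nonempty coalition C lies inside the prefix ending at its
   largest player k, so by monotonicity v C <= v{1..k} <= x_k. *)

Definition prefix n (i : 'I_n) : {set 'I_n} := [set j : 'I_n | (j <= i)%N].

Lemma mem_prefix n (i j : 'I_n) : (j \in prefix i) = (j <= i)%N.
Proof. by rewrite inE. Qed.

Lemma prefix_neq0 n (i : 'I_n) : prefix i != set0.
Proof. by apply/set0Pn; exists i; rewrite mem_prefix. Qed.

Lemma subset_prefix_max n (C : {set 'I_n}) :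
  C != set0 -> exists2 k, k \in C & C \subset prefix k.
Proof.
case/set0Pn=> i0 i0C; have [k kC kmax] := arg_maxnP (@nat_of_ord n) i0C.
by exists k => //; apply/subsetP=> j jC; rewrite mem_prefix; exact: kmax.
Qed.

Section PrefixStability.

Variables (R : realDomainType) (n : nat) (v : {set 'I_n} -> R) (x : 'I_n -> R).

Lemma stable_prefix_le :
  {homo x : i j / (i <= j)%N >-> i <= j} ->
  stable v x -> forall i, v (prefix i) <= x i.
Proof.
move=> x_sorted x_stable i; have [k + le_v_xk] := x_stable _ (prefix_neq0 i).
by rewrite mem_prefix => le_ki; exact: le_trans le_v_xk (x_sorted _ _ le_ki).
Qed.

Lemma prefix_le_stable :
  monotonic v -> (forall i, v (prefix i) <= x i) -> stable v x.
Proof.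
move=> v_mono x_prefix C /subset_prefix_max[k kC sub_C_k].
by exists k => //; exact: le_trans (v_mono _ _ sub_C_k) (x_prefix k).
Qed.

End PrefixStability.

Theorem proposition5 (R : realDomainType) (n : nat) (v : {set 'I_n} -> R)
  (x : 'I_n -> R) :
  monotonic v ->
  payoff_vector v x ->
  (forall i j : 'I_n, (i <= j)%N -> x i <= x j) ->
  (stable v x <-> forall i : 'I_n, v [set j : 'I_n | (j <= i)%N] <= x i).
Proof.
move=> v_mono _ x_sorted; split.
- exact: stable_prefix_le.
- exact: prefix_le_stable.
Qed.
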